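(* Let $2\le n_1<n_2$. Under exogenous participation and CRRA utility $u(w)=w^{1-\theta}/(1-\theta)$ with $\theta\in[0,1)$, the model structure $(F_0,D,\theta)$ is identified from the equilibrium bid distributions $G(\cdot\mid n_1)$ and $G(\cdot\mid n_2)$: any two such structures that induce the same pair $(G(\cdot\mid n_1),G(\cdot\mid n_2))$ coincide.
   Context: First-price auctions (no reserve price) with $n$ bidders, $n\in\{n_1,n_2\}$. Bidders' values are i.i.d. from $F_0$ on $[\underline v,\overline v]$ with continuous density $f_0>0$. Bidders have utility $u(w)=w^{1-\theta}/(1-\theta)$, $\theta\in[0,1)$, and maxmin expected utility over a weakly compact convex set $\Gamma$ of strictly increasing $C^1$ distributions on $[\underline v,\overline v]$ containing $F_0$, with least element $F^*\in\Gamma$ ($F^*\le F$ pointwise for all $F\in\Gamma$) having density $f^*>0$. Define $D(\gamma)=F^*(F_0^{-1}(\gamma))$ on $[0,1]$ ($D$ strictly increasing, $C^1$, $D(0)=0$, $D(1)=1$, $D(\gamma)\le\gamma$, $D'(0)>0$). Exogenous participation: $F_0$ and $\Gamma$ (hence $D$) do not depend on $n$. For $n$ bidders, a symmetric equilibrium is a strictly increasing differentiable $\beta_n$ such that for every value $v$, $x=v$ maximizes $u[v-\beta_n(x)]D[F_0(x)]^{n-1}$; $G(\cdot\mid n)$ is the distribution of $\beta_n(v)$ for $v\sim F_0$, with density $g(\cdot\mid n)$. *)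

From Stdlib Require Import Reals Lra.
Open Scope R_scope.

Definition deriv_on (a b : R) (f f' : R -> R) : Prop :=
  forall x, a <= x <= b ->
    limit1_in (fun y => (f y - f x) / (y - x))
              (fun y => a <= y <= b /\ y <> x) (f' x) x.

Definition cont_on (a b : R) (g : R -> R) : Prop :=
  forall x, a <= x <= b -> limit1_in g (fun y => a <= y <= b) (g x) x.

Definition C1_on (a b : R) (f f' : R -> R) : Prop :=
  deriv_on a b f f' /\ cont_on a b f'.

Definition strict_incr_on (a b : R) (f : R -> R) : Prop :=
  forall x y, a <= x <= b -> a <= y <= b -> x < y -> f x < f y.

Definition value_cdf (vl vh : R) (F0 : R -> R) : Prop :=
  vl < vh /\
  (forall x, x <= vl -> F0 x = 0) /\
  (forall x, vh <= x -> F0 x = 1) /\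
  strict_incr_on vl vh F0 /\
  exists f0, C1_on vl vh F0 f0 /\ (forall x, vl <= x <= vh -> 0 < f0 x).

(* D(gamma) = F*(F0^{-1}(gamma)) on [0,1]: strictly increasing, C^1, D(0)=0,
   D(1)=1, D(gamma) <= gamma, D'(0) > 0.  Since the least element F* has a
   density f* = D'(F0) f0 > 0, also D' > 0 on [0,1]. *)
Definition ambiguity_D (D : R -> R) : Prop :=
  strict_incr_on 0 1 D /\ D 0 = 0 /\ D 1 = 1 /\
  (forall g, 0 <= g <= 1 -> D g <= g) /\
  exists D', C1_on 0 1 D D' /\ 0 < D' 0 /\ (forall g, 0 <= g <= 1 -> 0 < D' g).

(* CRRA utility u(w) = w^(1-theta)/(1-theta); for w < 0 (overbidding) we use
   the odd extension -(-w)^(1-theta)/(1-theta) (equal to w when theta = 0). *)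
Definition crra (theta w : R) : R :=
  if Rlt_dec 0 w then Rpower w (1 - theta) / (1 - theta)
  else if Rlt_dec w 0 then - (Rpower (- w) (1 - theta) / (1 - theta))
  else 0.

Definition model_structure (vl vh : R) (F0 D : R -> R) (theta : R) : Prop :=
  value_cdf vl vh F0 /\ ambiguity_D D /\ 0 <= theta < 1.

Definition sym_equilibrium (n : nat) (vl vh : R) (F0 D : R -> R) (theta : R)
  (beta : R -> R) : Prop :=
  strict_incr_on vl vh beta /\
  (exists beta', deriv_on vl vh beta beta') /\
  forall v x, vl <= v <= vh -> vl <= x <= vh ->
    crra theta (v - beta x) * (D (F0 x)) ^ (n - 1)
      <= crra theta (v - beta v) * (D (F0 v)) ^ (n - 1).

(* G is the CDF of beta(V), V ~ F0 on [vl,vh]: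
   G b = P(beta V <= b).  For b below the lowest bid it is 0; if v in [vl,vh]
   is such that beta v <= b < beta w for all w in (v,vh], then
   {x | beta x <= b} = [vl,v] and G b = F0 v. *)
Definition bid_cdf (vl vh : R) (F0 beta G : R -> R) : Prop :=
  (forall b, b < beta vl -> G b = 0) /\
  (forall b v, vl <= v <= vh -> beta v <= b ->
     (forall w, v < w <= vh -> b < beta w) -> G b = F0 v).

(* A common bid distribution forces the two structures to bid the same amount,
   and with the same slope, at every quantile q.  In quantiles, the first-order
   condition of the n-bidder auction reads
     (1 - theta) b_n'(q) D(q) = (n - 1) (v(q) - b_n(q)) D'(q),
   with v(q) the value at quantile q.  As more bidders bid strictly more, the
   conditions for n1 and n2 determine both v(q), hence F0, and the ratio
   D'(q) / ((1 - theta) D(q)).  Thus D^(1/(1-theta)) is identified up to a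
   constant factor; the positive slope D'(0) forces the exponents, hence theta,
   to agree, and D(1) = 1 fixes the constant. *)

From Stdlib Require Import Reals Lra Lia.
Open Scope R_scope.

Lemma limit1_in_iff f D l x0 : limit1_in f D l x0 <->
  forall eps, 0 < eps -> exists alp, 0 < alp /\
    forall y, D y -> Rabs (y - x0) < alp -> Rabs (f y - l) < eps.
Proof.
  unfold limit1_in, limit_in; simpl; unfold R_dist; split.
  - intros H eps He; destruct (H eps He) as [alp [Ha Hb]]; exists alp; split; auto.
  - intros H eps He; destruct (H eps He) as [alp [Ha Hb]]; exists alp; split; auto.
    intros y [Hy1 Hy2]; auto.
Qed.

Lemma ln_le_compat x y : 0 < x -> x <= y -> ln x <= ln y.
Proof.
  intros Hx [Hxy | ->]; [left; apply ln_increasing; lra | lra].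
Qed.

Lemma increment_ratio_limit f g x lf lg :
  derivable_pt_lim f x lf -> derivable_pt_lim g x lg -> lg <> 0 ->
  limit1_in (fun y => (f y - f x) / (g y - g x)) (fun y => y <> x) (lf / lg) x.
Proof.
  intros Hf Hg Hl.
  assert (Hquot : forall h l, derivable_pt_lim h x l ->
            limit1_in (fun y => (h y - h x) / (y - x)) (fun y => y <> x) l x).
  { intros h l H. apply limit1_in_iff; intros eps He. destruct (H eps He) as [d Hd].
    exists d; split; [apply cond_pos |]. intros y Hy Hyd.
    specialize (Hd (y - x) ltac:(lra) Hyd). replace (x + (y - x)) with y in Hd by ring. exact Hd. }
  assert (L := limit_mul _ _ _ _ _ _ (Hquot f lf Hf) (limit_inv _ _ _ _ (Hquot g lg Hg) Hl)).
  apply limit1_in_iff; intros eps He.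
  destruct (proj1 (limit1_in_iff _ _ _ _) L eps He) as [d [Hd Hd2]].
  exists d; split; auto. intros y Hy Hyd. specialize (Hd2 y Hy Hyd).
  replace ((f y - f x) / (g y - g x)) with ((f y - f x) / (y - x) * / ((g y - g x) / (y - x))).
  { auto. }
  destruct (Req_dec (g y - g x) 0) as [E | E].
  - rewrite E. unfold Rdiv. rewrite Rmult_0_l, Rinv_0. ring.
  - field. split; auto. lra.
Qed.

Section ClosedInterval.
Variables a b : R.

Lemma deriv_on_derivable_pt_lim f f' x : deriv_on a b f f' -> a < x < b ->
  derivable_pt_lim f x (f' x).
Proof.
  intros H Hx eps He.
  destruct (proj1 (limit1_in_iff _ _ _ _) (H x ltac:(lra)) eps He) as [alp [Ha Hb]].
  assert (Hd : 0 < Rmin alp (Rmin (x - a) (b - x))) by (repeat apply Rmin_pos; lra).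
  exists (mkposreal _ Hd); simpl; intros h Hh Hl.
  pose proof (Rmin_l alp (Rmin (x - a) (b - x))).
  pose proof (Rmin_r alp (Rmin (x - a) (b - x))).
  pose proof (Rmin_l (x - a) (b - x)). pose proof (Rmin_r (x - a) (b - x)).
  apply Rabs_def2 in Hl.
  specialize (Hb (x + h)); replace (x + h - x) with h in Hb by ring.
  apply Hb; [split; [lra | lra] | apply Rabs_def1; lra].
Qed.

Lemma deriv_on_cont_on f f' : deriv_on a b f f' -> cont_on a b f.
Proof.
  intros H x Hx. apply limit1_in_iff; intros eps He.
  destruct (proj1 (limit1_in_iff _ _ _ _) (H x Hx) 1 Rlt_0_1) as [alp [Ha Hb]].
  set (M := 1 + Rabs (f' x)).
  assert (HM : 0 < M) by (unfold M; pose proof (Rabs_pos (f' x)); lra).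
  exists (Rmin alp (eps / M)); split.
  { apply Rmin_pos; [lra | apply Rdiv_lt_0_compat; lra]. }
  intros y Hy Hl.
  destruct (Req_dec y x) as [-> | Hne].
  { unfold Rminus; rewrite Rplus_opp_r, Rabs_R0; lra. }
  assert (Hq := Hb y (conj Hy Hne) (Rlt_le_trans _ _ _ Hl (Rmin_l _ _))).
  assert (Hq2 : Rabs ((f y - f x) / (y - x)) < M).
  { unfold M. pose proof (Rabs_triang_inv ((f y - f x) / (y - x)) (f' x)). lra. }
  assert (Hl2 : Rabs (y - x) < eps / M) by (eapply Rlt_le_trans; [exact Hl | apply Rmin_r]).
  replace (f y - f x) with ((f y - f x) / (y - x) * (y - x)) by (field; lra).
  rewrite Rabs_mult.
  apply Rle_lt_trans with (M * Rabs (y - x)).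
  { apply Rmult_le_compat_r; [apply Rabs_pos | lra]. }
  replace eps with (M * (eps / M)) by (field; lra).
  apply Rmult_lt_compat_l; lra.
Qed.

Lemma cont_on_at_right_end f g k : a < b -> cont_on a b f -> cont_on a b g ->
  (forall x, a < x < b -> f x = k * g x) -> f b = k * g b.
Proof.
  intros Hlt Hf Hg Hfg. apply cond_eq; intros eps He.
  set (K := Rabs k + 1).
  assert (HK : 0 < K) by (unfold K; pose proof (Rabs_pos k); lra).
  destruct (proj1 (limit1_in_iff _ _ _ _) (Hf b ltac:(lra)) (eps / 2) ltac:(lra))
    as [a1 [Ha1 H1]].
  destruct (proj1 (limit1_in_iff _ _ _ _) (Hg b ltac:(lra)) (eps / (2 * K))
    ltac:(apply Rdiv_lt_0_compat; lra)) as [a2 [Ha2 H2]].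
  pose proof (Rmin_l (Rmin a1 a2) (b - a)). pose proof (Rmin_r (Rmin a1 a2) (b - a)).
  pose proof (Rmin_l a1 a2). pose proof (Rmin_r a1 a2).
  set (d := Rmin (Rmin a1 a2) (b - a)) in *.
  assert (Hd : 0 < d) by (unfold d; repeat apply Rmin_pos; lra).
  set (x := b - d / 2).
  assert (Hx : Rabs (x - b) < d) by (rewrite Rabs_left; unfold x; lra).
  specialize (H1 x ltac:(unfold x; lra) ltac:(lra)).
  specialize (H2 x ltac:(unfold x; lra) ltac:(lra)).
  rewrite Hfg in H1 by (unfold x; lra).
  replace (f b - k * g b) with (- (k * g x - f b) + k * (g x - g b)) by ring.
  eapply Rle_lt_trans; [apply Rabs_triang |]. rewrite Rabs_Ropp, Rabs_mult.
  assert (Rabs k * Rabs (g x - g b) <= K * (eps / (2 * K))).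
  { apply Rmult_le_compat; try apply Rabs_pos; [unfold K; lra | lra]. }
  replace (K * (eps / (2 * K))) with (eps / 2) in * by (field; lra).
  lra.
Qed.

(* The trick for the intermediate value theorem: precomposing with the projection
   [clamp] onto [a,b] turns continuity on [a,b] into continuity on R. *)
Definition clamp x := Rmax a (Rmin b x).

Hypothesis Hab : a <= b.

Lemma clamp_in x : a <= clamp x <= b.
Proof. unfold clamp, Rmax, Rmin; repeat destruct Rle_dec; lra. Qed.

Lemma clamp_id x : a <= x <= b -> clamp x = x.
Proof. unfold clamp, Rmax, Rmin; repeat destruct Rle_dec; lra. Qed.

Lemma clamp_lipschitz x y : Rabs (clamp y - clamp x) <= Rabs (y - x).
Proof.
  unfold clamp, Rmax, Rmin; repeat destruct Rle_dec;
  unfold Rabs; repeat destruct Rcase_abs; lra.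
Qed.

Lemma continuity_clamp g : cont_on a b g -> continuity (fun x => g (clamp x)).
Proof.
  intros H x. apply limit1_in_iff; intros eps He.
  destruct (proj1 (limit1_in_iff _ _ _ _) (H (clamp x) (clamp_in x)) eps He)
    as [alp [Ha Hb]].
  exists alp; split; auto. intros y _ Hy.
  apply Hb; [apply clamp_in | eapply Rle_lt_trans; [apply clamp_lipschitz | exact Hy]].
Qed.

End ClosedInterval.

Lemma cont_on_IVT a b g x y t : cont_on a b g -> a <= x <= y -> y <= b ->
  g x <= t <= g y -> exists u, x <= u <= y /\ g u = t.
Proof.
  intros Hc Hxy Hyb Ht.
  destruct (Req_dec (g x) t) as [E | E]; [exists x; split; [lra | auto] |].
  destruct (Req_dec (g y) t) as [E' | E']; [exists y; split; [lra | auto] |].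
  assert (Hxy' : x < y) by (destruct (Req_dec x y) as [-> |]; lra).
  assert (Hc' : continuity (fun z => g (clamp a b z) - t)).
  { apply continuity_minus; [apply (continuity_clamp a b) | apply continuity_const]; auto; try lra.
    intros ? ?; auto. }
  destruct (IVT _ x y Hc' Hxy') as [z [Hz Hgz]]; rewrite ?(clamp_id a b) by lra; try lra.
  exists z; split; auto. rewrite (clamp_id a b) in Hgz; lra.
Qed.

Section Crra.
Variable th : R.
Hypothesis Hth : th < 1.

Lemma crra_pos_eq w : 0 < w -> crra th w = Rpower w (1 - th) / (1 - th).
Proof. intros; unfold crra; destruct Rlt_dec; [auto | lra]. Qed.

Lemma crra_pos w : 0 < w -> 0 < crra th w.
Proof. intros; rewrite crra_pos_eq; auto. apply Rdiv_lt_0_compat; [apply exp_pos | lra]. Qed.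

Lemma crra_neg w : w < 0 -> crra th w < 0.
Proof.
  intros; unfold crra; destruct Rlt_dec; [lra |]. destruct Rlt_dec; [| lra].
  assert (0 < Rpower (- w) (1 - th) / (1 - th)) by (apply Rdiv_lt_0_compat; [apply exp_pos | lra]).
  lra.
Qed.

End Crra.

Lemma crra_0 th : crra th 0 = 0.
Proof. unfold crra; repeat destruct Rlt_dec; lra. Qed.

Section ValueCdf.
Context {vl vh : R} {F0 : R -> R}.
Hypothesis HF : value_cdf vl vh F0.

Lemma value_cdf_vl : F0 vl = 0.
Proof. destruct HF as [_ [H _]]; apply H; lra. Qed.

Lemma value_cdf_vh : F0 vh = 1.
Proof. destruct HF as [_ [_ [H _]]]; apply H; lra. Qed.

Lemma value_cdf_lt x y : vl <= x <= vh -> vl <= y <= vh -> x < y -> F0 x < F0 y.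
Proof. destruct HF as [_ [_ [_ [H _]]]]; apply H. Qed.

Lemma value_cdf_in01 x : vl < x <= vh -> 0 < F0 x <= 1.
Proof.
  intros Hx; split; [rewrite <- value_cdf_vl; apply value_cdf_lt; lra |].
  destruct (Req_dec x vh) as [-> | Hne]; [rewrite value_cdf_vh; lra |].
  rewrite <- value_cdf_vh; left; apply value_cdf_lt; lra.
Qed.

Lemma value_cdf_interior x : vl < x < vh -> 0 < F0 x < 1.
Proof.
  intros; split; [apply value_cdf_in01; lra |].
  rewrite <- value_cdf_vh; apply value_cdf_lt; lra.
Qed.

Lemma value_cdf_cont : cont_on vl vh F0.
Proof. destruct HF as [_ [_ [_ [_ [f0 [[Hd _] _]]]]]]; exact (deriv_on_cont_on _ _ _ _ Hd). Qed.

Lemma value_cdf_onto q : 0 < q < 1 -> exists v, vl < v < vh /\ F0 v = q.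
Proof.
  intros Hq. destruct HF as [Hlt _].
  destruct (cont_on_IVT vl vh F0 vl vh q value_cdf_cont) as [v [Hv Hfv]];
    rewrite ?value_cdf_vl, ?value_cdf_vh; try lra.
  exists v; split; [| auto].
  split; apply Rnot_le_lt; intros Hle.
  - rewrite (Rle_antisym v vl) in Hfv by lra; rewrite value_cdf_vl in Hfv; lra.
  - rewrite (Rle_antisym v vh) in Hfv by lra; rewrite value_cdf_vh in Hfv; lra.
Qed.

Lemma value_cdf_local_preimage w d : vl < w < vh -> 0 < d ->
  exists e, 0 < e /\ forall q, Rabs (q - F0 w) < e ->
    exists z, vl < z < vh /\ Rabs (z - w) < d /\ F0 z = q.
Proof.
  intros Hw Hd.
  pose proof (Rmin_l d (Rmin (w - vl) (vh - w))). pose proof (Rmin_r d (Rmin (w - vl) (vh - w))).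
  pose proof (Rmin_l (w - vl) (vh - w)). pose proof (Rmin_r (w - vl) (vh - w)).
  set (m := Rmin d (Rmin (w - vl) (vh - w))) in *.
  assert (Hm : 0 < m) by (unfold m; repeat apply Rmin_pos; lra).
  set (r := m / 2).
  assert (Hlo : F0 (w - r) < F0 w) by (apply value_cdf_lt; unfold r in *; lra).
  assert (Hhi : F0 w < F0 (w + r)) by (apply value_cdf_lt; unfold r in *; lra).
  exists (Rmin (F0 w - F0 (w - r)) (F0 (w + r) - F0 w)); split; [apply Rmin_pos; lra |].
  intros q Hq. apply Rabs_def2 in Hq.
  pose proof (Rmin_l (F0 w - F0 (w - r)) (F0 (w + r) - F0 w)).
  pose proof (Rmin_r (F0 w - F0 (w - r)) (F0 (w + r) - F0 w)).
  destruct (cont_on_IVT vl vh F0 (w - r) (w + r) q value_cdf_cont) as [z [Hz <-]];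
    try (unfold r in *; lra).
  exists z; split; [| split; [apply Rabs_def1 |]]; unfold r in *; lra.
Qed.

End ValueCdf.

Section Ambiguity.
Context {D : R -> R}.
Hypothesis HD : ambiguity_D D.

Lemma ambiguity_D_bounds q : 0 < q < 1 -> 0 < D q <= q.
Proof.
  destruct HD as [Hi [H0 [_ [Hle _]]]]; intros Hq; split.
  - rewrite <- H0; apply Hi; lra.
  - apply Hle; lra.
Qed.

Lemma ambiguity_D_in01 q : 0 < q <= 1 -> 0 < D q <= 1.
Proof.
  destruct HD as [_ [_ [H1 _]]]; intros Hq.
  destruct (Req_dec q 1) as [-> | Hne]; [lra |].
  pose proof (ambiguity_D_bounds q ltac:(lra)); lra.
Qed.

End Ambiguity.

Section Equilibrium.
Context {vl vh : R} {F0 D : R -> R} {th : R} {n : nat} {beta : R -> R}.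
Hypothesis MS : model_structure vl vh F0 D th.
Hypothesis Hn : (2 <= n)%nat.
Hypothesis EQ : sym_equilibrium n vl vh F0 D th beta.

Let HF : value_cdf vl vh F0 := proj1 MS.
Let HD : ambiguity_D D := proj1 (proj2 MS).
Let Hth : 0 <= th < 1 := proj2 (proj2 MS).
Let Hvl : vl < vh := proj1 HF.

Lemma equilibrium_win_prob_pos x : vl < x <= vh -> 0 < D (F0 x) ^ (n - 1).
Proof.
  intros Hx; apply pow_lt, (ambiguity_D_in01 HD), (value_cdf_in01 HF); lra.
Qed.

Lemma equilibrium_win_prob_vl : D (F0 vl) ^ (n - 1) = 0.
Proof.
  rewrite (value_cdf_vl HF); destruct HD as [_ [-> _]]; apply pow_i; lia.
Qed.

Lemma equilibrium_bid_incr x y : vl <= x <= vh -> vl <= y <= vh -> x < y -> beta x < beta y.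
Proof. apply (proj1 EQ). Qed.

Lemma equilibrium_bid_cont : cont_on vl vh beta.
Proof. destruct EQ as [_ [[b' Hb] _]]; exact (deriv_on_cont_on _ _ _ _ Hb). Qed.

Lemma equilibrium_bid_le_value v : vl < v <= vh -> beta v <= v.
Proof.
  intros Hv. destruct EQ as [_ [_ Hopt]].
  specialize (Hopt v vl ltac:(lra) ltac:(lra)).
  rewrite equilibrium_win_prob_vl, Rmult_0_r in Hopt.
  apply Rnot_lt_le; intros Hc.
  pose proof (crra_neg th ltac:(lra) (v - beta v) ltac:(lra)).
  pose proof (equilibrium_win_prob_pos v Hv). nra.
Qed.

Lemma equilibrium_bid_lt_value v : vl < v <= vh -> beta v < v.
Proof.
  intros Hv. destruct (Rle_lt_or_eq_dec _ _ (equilibrium_bid_le_value v Hv)) as [| E]; auto.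
  exfalso. destruct EQ as [_ [_ Hopt]].
  set (m := (vl + v) / 2).
  specialize (Hopt v m ltac:(lra) ltac:(unfold m; lra)).
  rewrite E, Rminus_diag, crra_0, Rmult_0_l in Hopt.
  assert (beta m < beta v) by (apply equilibrium_bid_incr; unfold m; lra).
  pose proof (crra_pos th ltac:(lra) (v - beta m) ltac:(lra)).
  pose proof (equilibrium_win_prob_pos m ltac:(unfold m; lra)). nra.
Qed.

Lemma equilibrium_bid_ge_vl x : vl < x <= vh -> vl <= beta x.
Proof.
  intros Hx. destruct EQ as [_ [_ Hopt]].
  specialize (Hopt vl x ltac:(lra) ltac:(lra)).
  rewrite equilibrium_win_prob_vl, Rmult_0_r in Hopt.
  apply Rnot_lt_le; intros Hc.
  pose proof (crra_pos th ltac:(lra) (vl - beta x) ltac:(lra)).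
  pose proof (equilibrium_win_prob_pos x Hx). nra.
Qed.

(* The lowest type bids its value: above by [beta v < v], below by continuity and
   [vl <= beta x]. *)
Lemma equilibrium_bid_vl : beta vl = vl.
Proof.
  apply Rle_antisym; apply Rnot_lt_le; intros Hc.
  - set (x := Rmin vh ((vl + beta vl) / 2)).
    assert (Hx : vl < x <= vh) by (unfold x, Rmin; destruct Rle_dec; lra).
    assert (beta vl < beta x) by (apply equilibrium_bid_incr; lra).
    assert (beta x < x) by (apply equilibrium_bid_lt_value; auto).
    assert (x <= (vl + beta vl) / 2) by apply Rmin_r. lra.
  - destruct (proj1 (limit1_in_iff _ _ _ _) (equilibrium_bid_cont vl ltac:(lra))
      (vl - beta vl) ltac:(lra)) as [alp [Ha Hb]].
    set (x := Rmin vh (vl + alp / 2)).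
    assert (Hx : vl < x <= vh) by (unfold x, Rmin; destruct Rle_dec; lra).
    assert (x <= vl + alp / 2) by apply Rmin_r.
    specialize (Hb x ltac:(lra) ltac:(rewrite Rabs_right; lra)).
    pose proof (equilibrium_bid_ge_vl x Hx).
    apply Rabs_def2 in Hb. lra.
Qed.

Lemma equilibrium_FOC b' f0 dD v :
  deriv_on vl vh beta b' -> deriv_on vl vh F0 f0 -> deriv_on 0 1 D dD -> vl < v < vh ->
  (1 - th) * b' v * D (F0 v) = INR (n - 1) * (v - beta v) * dD (F0 v) * f0 v.
Proof.
  intros Hb' Hf0 HdD Hv.
  set (c := 1 - th). set (k := (n - 1)%nat).
  assert (Hc : 0 < c) by (unfold c; lra).
  assert (Hw : 0 < v - beta v) by (pose proof (equilibrium_bid_lt_value v ltac:(lra)); lra).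
  set (w0 := v - beta v) in *.
  (* Up to the factor [1 / c], the payoff of type [v] reporting [x] near [v]. *)
  set (phi := fun x => Rpower (v - beta x) c * D (F0 x) ^ k).
  set (l := c * Rpower w0 (c - 1) * (0 - b' v) * D (F0 v) ^ k +
            Rpower w0 c * (INR k * D (F0 v) ^ Init.Nat.pred k * (dD (F0 v) * f0 v))).
  assert (Hphi : derivable_pt_lim phi v l).
  { assert (H1 : derivable_pt_lim (comp (fun y => Rpower y c) (fun x => v - beta x)) v
                   (c * Rpower w0 (c - 1) * (0 - b' v))).
    { apply derivable_pt_lim_comp; [| apply derivable_pt_lim_power; auto].
      apply (derivable_pt_lim_minus (fct_cte v) beta);
        [apply derivable_pt_lim_const | apply (deriv_on_derivable_pt_lim vl vh); auto]. }
    assert (H2 : derivable_pt_lim (comp (fun y => y ^ k) (comp D F0)) v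
                   (INR k * D (F0 v) ^ Init.Nat.pred k * (dD (F0 v) * f0 v))).
    { apply derivable_pt_lim_comp; [| apply derivable_pt_lim_pow].
      apply derivable_pt_lim_comp;
        [apply (deriv_on_derivable_pt_lim vl vh) | apply (deriv_on_derivable_pt_lim 0 1)];
        auto; apply (value_cdf_interior HF); auto. }
    exact (derivable_pt_lim_mult _ _ _ _ _ H1 H2). }
  assert (Hmax : exists d, 0 < d /\ forall x, v - d < x < v + d -> phi x <= phi v).
  { destruct (proj1 (limit1_in_iff _ _ _ _) (equilibrium_bid_cont v ltac:(lra)) w0 Hw)
      as [alp [Ha Hb]].
    pose proof (Rmin_l alp (Rmin (v - vl) (vh - v))).
    pose proof (Rmin_r alp (Rmin (v - vl) (vh - v))).
    pose proof (Rmin_l (v - vl) (vh - v)). pose proof (Rmin_r (v - vl) (vh - v)).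
    set (d := Rmin alp (Rmin (v - vl) (vh - v))) in *.
    exists d; split; [unfold d; repeat apply Rmin_pos; lra |].
    intros x Hx.
    specialize (Hb x ltac:(lra) ltac:(apply Rabs_def1; lra)). apply Rabs_def2 in Hb.
    destruct EQ as [_ [_ Hopt]].
    specialize (Hopt v x ltac:(lra) ltac:(lra)).
    rewrite !crra_pos_eq in Hopt by (unfold w0 in *; lra).
    unfold phi, Rdiv in *. fold c k w0 in Hopt.
    apply Rmult_le_reg_r with (/ c); [apply Rinv_0_lt_compat; auto | fold w0; lra]. }
  assert (Hl0 : l = 0).
  { destruct Hmax as [d [Hd Hmax]].
    change l with (derive_pt phi v (exist _ l Hphi)).
    apply deriv_maximum with (v - d) (v + d); try lra.
    intros; apply Hmax; lra. }
  assert (HP : Rpower w0 c = Rpower w0 (c - 1) * w0).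
  { rewrite <- (Rpower_1 w0) at 3 by auto. rewrite <- Rpower_plus. f_equal; ring. }
  assert (Hk : k = S (Init.Nat.pred k)) by (unfold k; lia).
  assert (HQ : 0 < Rpower w0 (c - 1)) by apply exp_pos.
  assert (Hd0 : 0 < D (F0 v)) by (apply (ambiguity_D_in01 HD), (value_cdf_in01 HF); lra).
  assert (Hdk : 0 < D (F0 v) ^ Init.Nat.pred k) by (apply pow_lt; auto).
  unfold l in Hl0. rewrite HP, Hk in Hl0. simpl pow in Hl0. rewrite <- Hk in Hl0.
  apply Rmult_eq_reg_l with (Rpower w0 (c - 1) * D (F0 v) ^ Init.Nat.pred k);
    [nra | apply Rgt_not_eq, Rmult_lt_0_compat; auto].
Qed.

Lemma equilibrium_quantile_FOC b' f0 dD v :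
  deriv_on vl vh beta b' -> deriv_on vl vh F0 f0 -> deriv_on 0 1 D dD -> vl < v < vh ->
  f0 v <> 0 ->
  (1 - th) * (b' v / f0 v) * D (F0 v) = INR (n - 1) * (v - beta v) * dD (F0 v).
Proof.
  intros Hb' Hf0 HdD Hv Hf.
  apply Rmult_eq_reg_r with (f0 v); auto.
  rewrite <- (equilibrium_FOC b' f0 dD v) by auto. field; auto.
Qed.

End Equilibrium.

Section BidOrder.
Context {vl vh : R} {F0 D : R -> R} {th : R} {n1 n2 : nat} {beta1 beta2 : R -> R}.
Hypothesis MS : model_structure vl vh F0 D th.
Hypothesis Hn1 : (2 <= n1)%nat.
Hypothesis Hn12 : (n1 < n2)%nat.
Hypothesis EQ1 : sym_equilibrium n1 vl vh F0 D th beta1.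
Hypothesis EQ2 : sym_equilibrium n2 vl vh F0 D th beta2.

Let HF : value_cdf vl vh F0 := proj1 MS.
Let HD : ambiguity_D D := proj1 (proj2 MS).
Let Hth : 0 <= th < 1 := proj2 (proj2 MS).
Let Hvl : vl < vh := proj1 HF.
Let Hn2 : (2 <= n2)%nat. Proof. lia. Qed.

(* The bid gap weighted by [D(F0)^((n2-1)/(1-th))]; the two first-order
   conditions make its derivative a positive multiple of [n2 - n1]. *)
Let a := INR (n2 - 1) / (1 - th).
Let gap x := (beta2 x - beta1 x) * Rpower (D (F0 x)) a.

Section GapDerivative.
Variables b1' b2' f0 dD : R -> R.
Hypothesis Hb1 : deriv_on vl vh beta1 b1'.
Hypothesis Hb2 : deriv_on vl vh beta2 b2'.
Hypothesis Hf0 : deriv_on vl vh F0 f0.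
Hypothesis Hf0p : forall x, vl <= x <= vh -> 0 < f0 x.
Hypothesis HdD : deriv_on 0 1 D dD.
Hypothesis HdDp : forall g, 0 <= g <= 1 -> 0 < dD g.

Let gap' x := (b2' x - b1' x) * Rpower (D (F0 x)) a +
  (beta2 x - beta1 x) * (a * Rpower (D (F0 x)) (a - 1) * (dD (F0 x) * f0 x)).

Lemma weighted_gap_derivable x : vl < x < vh -> derivable_pt_lim gap x (gap' x).
Proof.
  intros Hx. pose proof (value_cdf_interior HF x Hx).
  assert (Hd : 0 < D (F0 x)) by (apply (ambiguity_D_bounds HD); lra).
  apply (derivable_pt_lim_mult (beta2 - beta1)%F (comp (fun y => Rpower y a) (comp D F0))).
  - apply derivable_pt_lim_minus; apply (deriv_on_derivable_pt_lim vl vh); auto.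
  - apply derivable_pt_lim_comp; [| apply derivable_pt_lim_power; auto].
    apply derivable_pt_lim_comp;
      [apply (deriv_on_derivable_pt_lim vl vh) | apply (deriv_on_derivable_pt_lim 0 1)]; auto.
Qed.

Lemma weighted_gap_deriv_pos x : vl < x < vh -> 0 < gap' x.
Proof.
  intros Hx. pose proof (value_cdf_interior HF x Hx).
  set (c := 1 - th). set (k1 := INR (n1 - 1)). set (k2 := INR (n2 - 1)).
  assert (Hc : 0 < c) by (unfold c; lra).
  assert (Hk : k1 < k2) by (apply lt_INR; lia).
  assert (Hk1 : 0 < k1) by (apply lt_0_INR; lia).
  assert (Hd : 0 < D (F0 x)) by (apply (ambiguity_D_bounds HD); lra).
  assert (Hp : 0 < dD (F0 x) * f0 x) by (apply Rmult_lt_0_compat; [apply HdDp | apply Hf0p]; lra).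
  assert (Hw : 0 < x - beta1 x) by (pose proof (equilibrium_bid_lt_value MS Hn1 EQ1 x ltac:(lra)); lra).
  pose proof (equilibrium_FOC MS Hn1 EQ1 _ _ _ x Hb1 Hf0 HdD Hx) as E1.
  pose proof (equilibrium_FOC MS Hn2 EQ2 _ _ _ x Hb2 Hf0 HdD Hx) as E2.
  fold c k1 in E1. fold c k2 in E2.
  set (d := D (F0 x)) in *. set (p := dD (F0 x) * f0 x) in *.
  set (Q := Rpower d (a - 1)).
  assert (HQ : 0 < Q) by apply exp_pos.
  assert (HR : Rpower d a = Q * d).
  { unfold Q; rewrite <- (Rpower_1 d) at 3 by auto. rewrite <- Rpower_plus. f_equal; ring. }
  assert (Key : c * d * gap' x = Q * d * (k2 - k1) * (x - beta1 x) * p).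
  { unfold gap'. fold d p. rewrite HR. fold Q. unfold a. fold c k2.
    transitivity (Q * d * (c * b2' x * d - c * b1' x * d) + (beta2 x - beta1 x) * k2 * Q * d * p).
    { clearbody d p Q; field; lra. }
    rewrite E1, E2; unfold p; ring. }
  apply Rmult_lt_reg_l with (c * d); [apply Rmult_lt_0_compat; auto |].
  rewrite Rmult_0_r, Key. clearbody d p Q. repeat apply Rmult_lt_0_compat; lra.
Qed.

End GapDerivative.

Lemma weighted_gap_incr x y : vl < x -> x < y -> y < vh -> gap x < gap y.
Proof.
  intros.
  destruct EQ1 as [_ [[b1' Hb1] _]]. destruct EQ2 as [_ [[b2' Hb2] _]].
  pose proof HF as [_ [_ [_ [_ [f0 [[Hf0 _] Hf0p]]]]]].
  pose proof HD as [_ [_ [_ [_ [dD [[HdD _] [_ HdDp]]]]]]].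
  destruct (MVT_cor2 gap _ x y ltac:(lra)
    (fun z Hz => weighted_gap_derivable _ _ _ _ Hb1 Hb2 Hf0 HdD z ltac:(lra))) as [z [Hz Hzi]].
  pose proof (weighted_gap_deriv_pos _ _ _ _ Hb1 Hb2 Hf0 Hf0p HdD HdDp z ltac:(lra)).
  assert (0 < gap y - gap x) by (rewrite Hz; apply Rmult_lt_0_compat; lra).
  lra.
Qed.

(* Both bid functions start at [vl] and the weight lies in (0,1], so the gap
   vanishes at [vl+]. *)
Lemma weighted_gap_small_near_vl x eps : vl < x -> 0 < eps ->
  exists u, vl < u < x /\ Rabs (gap u) < eps.
Proof.
  intros Hx He.
  destruct (proj1 (limit1_in_iff _ _ _ _) (equilibrium_bid_cont EQ1 vl ltac:(lra)) (eps / 2)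
    ltac:(lra)) as [a1 [Ha1 Hc1]].
  destruct (proj1 (limit1_in_iff _ _ _ _) (equilibrium_bid_cont EQ2 vl ltac:(lra)) (eps / 2)
    ltac:(lra)) as [a2 [Ha2 Hc2]].
  pose proof (Rmin_l (Rmin a1 a2) (Rmin (x - vl) (vh - vl))).
  pose proof (Rmin_r (Rmin a1 a2) (Rmin (x - vl) (vh - vl))).
  pose proof (Rmin_l a1 a2). pose proof (Rmin_r a1 a2).
  pose proof (Rmin_l (x - vl) (vh - vl)). pose proof (Rmin_r (x - vl) (vh - vl)).
  set (d := Rmin (Rmin a1 a2) (Rmin (x - vl) (vh - vl))) in *.
  assert (Hd : 0 < d) by (unfold d; repeat apply Rmin_pos; lra).
  set (u := vl + d / 2).
  assert (Hu : Rabs (u - vl) < d) by (rewrite Rabs_right; unfold u; lra).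
  specialize (Hc1 u ltac:(unfold u; lra) ltac:(lra)).
  specialize (Hc2 u ltac:(unfold u; lra) ltac:(lra)).
  rewrite (equilibrium_bid_vl MS Hn1 EQ1) in Hc1. rewrite (equilibrium_bid_vl MS Hn2 EQ2) in Hc2.
  exists u; split; [unfold u; lra |].
  assert (Hw : 0 < Rpower (D (F0 u)) a <= 1).
  { split; [apply exp_pos |].
    assert (Hdu : 0 < D (F0 u) <= 1)
      by (apply (ambiguity_D_in01 HD), (value_cdf_in01 HF); unfold u; lra).
    assert (Ha : 0 < a) by (apply Rdiv_lt_0_compat; [apply lt_0_INR; lia | lra]).
    apply Rle_trans with (Rpower 1 a); [apply Rle_Rpower_l; lra |].
    unfold Rpower; rewrite ln_1, Rmult_0_r, exp_0; lra. }
  unfold gap; rewrite Rabs_mult, (Rabs_right (Rpower _ _)) by lra.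
  assert (Rabs (beta2 u - beta1 u) < eps).
  { replace (beta2 u - beta1 u) with ((beta2 u - vl) - (beta1 u - vl)) by ring.
    eapply Rle_lt_trans; [apply Rabs_triang | rewrite Rabs_Ropp; lra]. }
  pose proof (Rabs_pos (beta2 u - beta1 u)). nra.
Qed.

Lemma equilibrium_bid_lt_more_bidders v : vl < v < vh -> beta1 v < beta2 v.
Proof.
  intros Hv. set (m := (vl + v) / 2).
  assert (Hm : 0 <= gap m).
  { apply Rnot_lt_le; intros Hneg.
    destruct (weighted_gap_small_near_vl m (- gap m) ltac:(unfold m; lra) ltac:(lra))
      as [u [Hu Hgu]].
    pose proof (weighted_gap_incr u m ltac:(lra) ltac:(lra) ltac:(unfold m; lra)).
    apply Rabs_def2 in Hgu. lra. }
  pose proof (weighted_gap_incr m v ltac:(unfold m; lra) ltac:(unfold m; lra) ltac:(lra)).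
  assert (0 < Rpower (D (F0 v)) a) by apply exp_pos.
  unfold gap in *. nra.
Qed.

End BidOrder.

Section BidDistribution.
Context {vl vh : R} {F0 D : R -> R} {th : R} {n : nat} {beta G : R -> R}.
Hypothesis MS : model_structure vl vh F0 D th.
Hypothesis EQ : sym_equilibrium n vl vh F0 D th beta.
Hypothesis BC : bid_cdf vl vh F0 beta G.

Let HF : value_cdf vl vh F0 := proj1 MS.
Let Hvl : vl < vh := proj1 HF.

Lemma bid_cdf_at_bid u : vl <= u <= vh -> G (beta u) = F0 u.
Proof.
  intros Hu. apply (proj2 BC); [auto | lra |].
  intros w Hw; apply (equilibrium_bid_incr EQ); lra.
Qed.

Lemma bid_cdf_ge z b : vl <= z <= vh -> beta z <= b -> F0 z <= G b.
Proof.
  intros Hz Hb. destruct (Rle_dec (beta vh) b) as [Hh | Hh].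
  - rewrite (proj2 BC b vh) by (lra || (intros; lra)).
    destruct (Req_dec z vh) as [-> | Hne]; [lra |].
    left; apply (value_cdf_lt HF); lra.
  - destruct (cont_on_IVT vl vh beta z vh b (equilibrium_bid_cont EQ)) as [u [Hu <-]]; try lra.
    rewrite bid_cdf_at_bid by lra.
    destruct (Req_dec z u) as [-> | Hne]; [lra |].
    left; apply (value_cdf_lt HF); lra.
Qed.

Lemma bid_cdf_lt z b : vl < z <= vh -> b < beta z -> G b < F0 z.
Proof.
  intros Hz Hb. destruct (Rlt_dec b (beta vl)) as [Hl | Hl].
  - rewrite (proj1 BC) by auto. apply (value_cdf_in01 HF); auto.
  - destruct (cont_on_IVT vl vh beta vl z b (equilibrium_bid_cont EQ)) as [u [Hu <-]]; try lra.
    rewrite bid_cdf_at_bid by lra.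
    destruct (Req_dec z u) as [-> | Hne]; [lra |].
    apply (value_cdf_lt HF); lra.
Qed.

End BidDistribution.

Lemma same_bid_cdf_bid_at_quantile vl vh F0 D th vl' vh' F0' D' th' n beta beta' G y z :
  model_structure vl vh F0 D th -> model_structure vl' vh' F0' D' th' ->
  sym_equilibrium n vl vh F0 D th beta -> sym_equilibrium n vl' vh' F0' D' th' beta' ->
  bid_cdf vl vh F0 beta G -> bid_cdf vl' vh' F0' beta' G ->
  vl < y <= vh -> vl' < z <= vh' -> F0 y = F0' z -> beta y = beta' z.
Proof.
  intros M M' E E' B B' Hy Hz Hq.
  destruct (Rtotal_order (beta y) (beta' z)) as [H | [H | H]]; auto; exfalso;
    set (b := (beta y + beta' z) / 2).
  - pose proof (bid_cdf_ge M E B y b ltac:(lra) ltac:(unfold b; lra)).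
    pose proof (bid_cdf_lt M' E' B' z b Hz ltac:(unfold b; lra)). lra.
  - pose proof (bid_cdf_ge M' E' B' z b ltac:(lra) ltac:(unfold b; lra)).
    pose proof (bid_cdf_lt M E B y b Hy ltac:(unfold b; lra)). lra.
Qed.

Lemma same_bid_cdf_bid_slope_at_quantile vl vh F0 D th vl' vh' F0' D' th' n beta beta' G
    b f0 b' f0' v w :
  model_structure vl vh F0 D th -> model_structure vl' vh' F0' D' th' ->
  sym_equilibrium n vl vh F0 D th beta -> sym_equilibrium n vl' vh' F0' D' th' beta' ->
  bid_cdf vl vh F0 beta G -> bid_cdf vl' vh' F0' beta' G ->
  deriv_on vl vh beta b -> deriv_on vl vh F0 f0 ->
  deriv_on vl' vh' beta' b' -> deriv_on vl' vh' F0' f0' ->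
  vl < v < vh -> vl' < w < vh' -> f0 v <> 0 -> f0' w <> 0 -> F0 v = F0' w ->
  b v / f0 v = b' w / f0' w.
Proof.
  intros M M' E E' B B' Db Df Db' Df' Hv Hw Hf Hf' Hq.
  apply cond_eq; intros eps He.
  destruct (proj1 (limit1_in_iff _ _ _ _) (increment_ratio_limit _ _ _ _ _
    (deriv_on_derivable_pt_lim _ _ _ _ _ Db Hv) (deriv_on_derivable_pt_lim _ _ _ _ _ Df Hv) Hf)
    (eps / 2) ltac:(lra)) as [d1 [Hd1 R1]].
  destruct (proj1 (limit1_in_iff _ _ _ _) (increment_ratio_limit _ _ _ _ _
    (deriv_on_derivable_pt_lim _ _ _ _ _ Db' Hw) (deriv_on_derivable_pt_lim _ _ _ _ _ Df' Hw) Hf')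
    (eps / 2) ltac:(lra)) as [d2 [Hd2 R2]].
  destruct (value_cdf_local_preimage (proj1 M') w d2 Hw Hd2) as [e [He' Hpre]].
  destruct (proj1 (limit1_in_iff _ _ _ _) (value_cdf_cont (proj1 M) v ltac:(lra)) e He')
    as [d3 [Hd3 C3]].
  pose proof (Rmin_l (Rmin d1 d3) (vh - v)). pose proof (Rmin_r (Rmin d1 d3) (vh - v)).
  pose proof (Rmin_l d1 d3). pose proof (Rmin_r d1 d3).
  set (y := v + Rmin (Rmin d1 d3) (vh - v) / 2).
  assert (Hr : 0 < Rmin (Rmin d1 d3) (vh - v)) by (repeat apply Rmin_pos; lra).
  assert (Hy : v < y < vh) by (unfold y; lra).
  assert (Hyv : Rabs (y - v) < Rmin (Rmin d1 d3) (vh - v)) by (rewrite Rabs_right; unfold y; lra).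
  specialize (C3 y ltac:(lra) ltac:(lra)). rewrite Hq in C3.
  destruct (Hpre _ C3) as [z [Hz [Hzw Hzq]]].
  assert (Hzw' : z <> w).
  { intros ->. rewrite <- Hq in Hzq.
    pose proof (value_cdf_lt (proj1 M) v y ltac:(lra) ltac:(lra) ltac:(lra)). lra. }
  specialize (R1 y ltac:(lra) ltac:(lra)). specialize (R2 z Hzw' Hzw).
  rewrite (same_bid_cdf_bid_at_quantile _ _ _ _ _ _ _ _ _ _ _ _ _ _ y z M M' E E' B B')
    in R1 by (auto; lra).
  rewrite (same_bid_cdf_bid_at_quantile _ _ _ _ _ _ _ _ _ _ _ _ _ _ v w M M' E E' B B')
    in R1 by (auto; lra).
  rewrite <- Hzq, Hq in R1.
  replace (b v / f0 v - b' w / f0' w)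
    with (- (((beta' z - beta' w) / (F0' z - F0' w)) - b v / f0 v)
          + (((beta' z - beta' w) / (F0' z - F0' w)) - b' w / f0' w)) by ring.
  eapply Rle_lt_trans; [apply Rabs_triang |]. rewrite Rabs_Ropp. lra.
Qed.

(* The first-order conditions for [n1] and [n2] bidders in two structures, at a
   quantile where they share the bids [B_i] and the bid slopes [P_i]. *)
Lemma foc_pair_identification c c' d e dD dE k1 k2 P1 P2 B1 B2 v w :
  0 < k1 -> 0 < k2 -> B1 <> B2 -> 0 < c * d * dE ->
  c * P1 * d = k1 * (v - B1) * dD -> c * P2 * d = k2 * (v - B2) * dD ->
  c' * P1 * e = k1 * (w - B1) * dE -> c' * P2 * e = k2 * (w - B2) * dE ->
  v = w /\ c' * e * dD = c * d * dE.
Proof.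
  intros Hk1 Hk2 HB HX F1 F2 F1' F2'.
  assert (Hcross : forall k P B, 0 < k -> c * P * d = k * (v - B) * dD ->
            c' * P * e = k * (w - B) * dE -> (v - B) * (c' * e * dD) = (w - B) * (c * d * dE)).
  { intros k P B Hk H H'. apply Rmult_eq_reg_l with k; [| lra].
    transitivity (c' * e * (k * (v - B) * dD)); [ring | rewrite <- H].
    transitivity (c * d * (c' * P * e)); [ring | rewrite H'; ring]. }
  pose proof (Hcross k1 P1 B1 Hk1 F1 F1') as C1.
  pose proof (Hcross k2 P2 B2 Hk2 F2 F2') as C2.
  assert (HXY : c' * e * dD = c * d * dE).
  { apply Rmult_eq_reg_l with (B2 - B1); [| lra].
    transitivity ((v - B1) * (c' * e * dD) - (v - B2) * (c' * e * dD)); [ring |].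
    rewrite C1, C2; ring. }
  split; [| auto].
  rewrite HXY in C1. apply Rmult_eq_reg_r in C1; lra.
Qed.

Lemma interior_identification n1 n2 vl vh F0 D th vl' vh' F0' D' th'
    beta1 beta2 beta1' beta2' G1 G2 dD dE :
  (2 <= n1)%nat -> (n1 < n2)%nat ->
  model_structure vl vh F0 D th -> model_structure vl' vh' F0' D' th' ->
  sym_equilibrium n1 vl vh F0 D th beta1 -> sym_equilibrium n2 vl vh F0 D th beta2 ->
  sym_equilibrium n1 vl' vh' F0' D' th' beta1' -> sym_equilibrium n2 vl' vh' F0' D' th' beta2' ->
  bid_cdf vl vh F0 beta1 G1 -> bid_cdf vl' vh' F0' beta1' G1 ->
  bid_cdf vl vh F0 beta2 G2 -> bid_cdf vl' vh' F0' beta2' G2 ->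
  deriv_on 0 1 D dD -> (forall g, 0 <= g <= 1 -> 0 < dD g) ->
  deriv_on 0 1 D' dE -> (forall g, 0 <= g <= 1 -> 0 < dE g) ->
  forall v, vl < v < vh ->
    vl' < v < vh' /\ F0' v = F0 v /\
    (1 - th') * D' (F0 v) * dD (F0 v) = (1 - th) * D (F0 v) * dE (F0 v).
Proof.
  intros Hn1 Hn12 M M' E1 E2 E1' E2' B1 B1' B2 B2' DD HD DE HE v Hv.
  assert (Hn2 : (2 <= n2)%nat) by lia.
  pose proof M as [[_ [_ [_ [_ [f0 [[Df _] Hf]]]]]] [AD Hth]].
  pose proof M' as [[_ [_ [_ [_ [f0' [[Df' _] Hf']]]]]] _].
  pose proof E1 as [_ [[b1 Db1] _]]. pose proof E2 as [_ [[b2 Db2] _]].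
  pose proof E1' as [_ [[b1' Db1'] _]]. pose proof E2' as [_ [[b2' Db2'] _]].
  pose proof (value_cdf_interior (proj1 M) v Hv) as Hq.
  set (q := F0 v) in *.
  destruct (value_cdf_onto (proj1 M') q Hq) as [w [Hw Hwq]].
  assert (Hfv : f0 v <> 0) by (apply Rgt_not_eq, Hf; lra).
  assert (Hfw : f0' w <> 0) by (apply Rgt_not_eq, Hf'; lra).
  pose proof (same_bid_cdf_bid_slope_at_quantile _ _ _ _ _ _ _ _ _ _ _ _ _ _ _ _ _ _ v w
    M M' E1 E1' B1 B1' Db1 Df Db1' Df' Hv Hw Hfv Hfw (eq_sym Hwq)) as S1.
  pose proof (same_bid_cdf_bid_slope_at_quantile _ _ _ _ _ _ _ _ _ _ _ _ _ _ _ _ _ _ v w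
    M M' E2 E2' B2 B2' Db2 Df Db2' Df' Hv Hw Hfv Hfw (eq_sym Hwq)) as S2.
  pose proof (same_bid_cdf_bid_at_quantile _ _ _ _ _ _ _ _ _ _ _ _ _ _ v w
    M M' E1 E1' B1 B1' ltac:(lra) ltac:(lra) (eq_sym Hwq)) as Q1.
  pose proof (same_bid_cdf_bid_at_quantile _ _ _ _ _ _ _ _ _ _ _ _ _ _ v w
    M M' E2 E2' B2 B2' ltac:(lra) ltac:(lra) (eq_sym Hwq)) as Q2.
  pose proof (equilibrium_quantile_FOC M Hn1 E1 _ _ _ v Db1 Df DD Hv Hfv) as F1.
  pose proof (equilibrium_quantile_FOC M Hn2 E2 _ _ _ v Db2 Df DD Hv Hfv) as F2.
  pose proof (equilibrium_quantile_FOC M' Hn1 E1' _ _ _ w Db1' Df' DE Hw Hfw) as F1'.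
  pose proof (equilibrium_quantile_FOC M' Hn2 E2' _ _ _ w Db2' Df' DE Hw Hfw) as F2'.
  rewrite <- S1, <- Q1, Hwq in F1'. rewrite <- S2, <- Q2, Hwq in F2'.
  pose proof (equilibrium_bid_lt_more_bidders M Hn1 Hn12 E1 E2 v Hv) as Hord.
  assert (HX : 0 < (1 - th) * D q * dE q).
  { pose proof (ambiguity_D_bounds AD q Hq). pose proof (HE q ltac:(lra)).
    repeat apply Rmult_lt_0_compat; lra. }
  assert (K1 : 0 < INR (n1 - 1)) by (apply lt_0_INR; lia).
  assert (K2 : 0 < INR (n2 - 1)) by (apply lt_0_INR; lia).
  destruct (foc_pair_identification _ _ _ _ _ _ _ _ _ _ _ _ _ _
    K1 K2 (Rlt_not_eq _ _ Hord) HX F1 F2 F1' F2') as [<- Hrel].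
  split; [lra | split; auto].
Qed.

Lemma ambiguity_log_relation_const D E dD dE c c' :
  ambiguity_D D -> ambiguity_D E -> deriv_on 0 1 D dD -> deriv_on 0 1 E dE ->
  (forall q, 0 < q < 1 -> c' * E q * dD q = c * D q * dE q) ->
  exists K, forall q, 0 < q < 1 -> c * ln (E q) = c' * ln (D q) + K.
Proof.
  intros AD AE DD DE Rel.
  set (L := fun q => c * ln (E q) - c' * ln (D q)).
  set (L' := fun q => c * (/ E q * dE q) - c' * (/ D q * dD q)).
  assert (Lder : forall q, 0 < q < 1 -> derivable_pt_lim L q (L' q)).
  { intros q Hq. pose proof (ambiguity_D_bounds AD q Hq). pose proof (ambiguity_D_bounds AE q Hq).
    apply (derivable_pt_lim_minus (mult_real_fct c (comp ln E)) (mult_real_fct c' (comp ln D)));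
      apply derivable_pt_lim_scal, derivable_pt_lim_comp;
      solve [apply (deriv_on_derivable_pt_lim 0 1); auto | apply derivable_pt_lim_ln; lra]. }
  assert (L'0 : forall q, 0 < q < 1 -> L' q = 0).
  { intros q Hq. pose proof (ambiguity_D_bounds AD q Hq). pose proof (ambiguity_D_bounds AE q Hq).
    unfold L'. specialize (Rel q Hq).
    apply Rmult_eq_reg_l with (E q * D q); [| apply Rgt_not_eq, Rmult_lt_0_compat; lra].
    transitivity (c * D q * dE q - c' * E q * dD q); [field; lra | lra]. }
  exists (L (1 / 2)). intros q Hq.
  enough (L q = L (1 / 2)) by (unfold L in *; lra).
  destruct (Rtotal_order q (1 / 2)) as [H | [-> | H]]; [| auto |];
    [destruct (MVT_cor2 L L' q (1 / 2) H) as [z [Hz Hzi]] |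
     destruct (MVT_cor2 L L' (1 / 2) q H) as [z [Hz Hzi]]];
    try (intros; apply Lder; lra); rewrite L'0 in Hz by lra; lra.
Qed.

Lemma deriv_pos_at_0_not_ln_bounded A dA s m :
  deriv_on 0 1 A dA -> A 0 = 0 -> 0 < dA 0 -> 1 < s ->
  ~ (forall q, 0 < q < 1 -> ln (A q) <= s * ln q + m).
Proof.
  intros DA A0 Hd Hs Hle.
  set (e0 := dA 0 / 2).
  destruct (proj1 (limit1_in_iff _ _ _ _) (DA 0 ltac:(lra)) e0 ltac:(unfold e0; lra))
    as [alp [Ha Hl]].
  set (t := (ln e0 - m) / (s - 1) - 1).
  pose proof (Rmin_l (Rmin (alp / 2) (1 / 2)) (exp t)).
  pose proof (Rmin_r (Rmin (alp / 2) (1 / 2)) (exp t)).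
  pose proof (Rmin_l (alp / 2) (1 / 2)). pose proof (Rmin_r (alp / 2) (1 / 2)).
  set (q := Rmin (Rmin (alp / 2) (1 / 2)) (exp t)) in *.
  assert (Hq : 0 < q) by (unfold q; repeat apply Rmin_pos; try apply exp_pos; lra).
  specialize (Hl q ltac:(lra) ltac:(rewrite Rminus_0_r, Rabs_right; lra)).
  rewrite A0, !Rminus_0_r in Hl. apply Rabs_def2 in Hl.
  assert (HAq : q * e0 < A q).
  { replace (A q) with (q * (A q / q)) by (field; lra).
    apply Rmult_lt_compat_l; unfold e0 in *; lra. }
  assert (Hlow : ln q + ln e0 < ln (A q)).
  { rewrite <- ln_mult by (unfold e0; lra).
    apply ln_increasing; [apply Rmult_lt_0_compat; unfold e0; lra | auto]. }
  assert (Hqt : ln q <= t) by (rewrite <- (ln_exp t); apply ln_le_compat; auto).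
  assert (Ht : (s - 1) * t = ln e0 - m - (s - 1)) by (unfold t; field; lra).
  specialize (Hle q ltac:(lra)).
  assert ((s - 1) * ln q <= (s - 1) * t) by (apply Rmult_le_compat_l; lra).
  lra.
Qed.

Lemma ambiguity_log_exponent_le D E dE c c' K :
  ambiguity_D D -> ambiguity_D E -> deriv_on 0 1 E dE -> 0 < dE 0 -> 0 < c ->
  (forall q, 0 < q < 1 -> c * ln (E q) = c' * ln (D q) + K) -> c' <= c.
Proof.
  intros AD AE DE HE0 Hc Rel. apply Rnot_lt_le; intros Hlt.
  apply (deriv_pos_at_0_not_ln_bounded E dE (c' / c) (K / c) DE (proj1 (proj2 AE)) HE0).
  - apply Rmult_lt_reg_r with c; auto. unfold Rdiv; rewrite Rmult_assoc, Rinv_l; lra.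
  - intros q Hq. destruct (ambiguity_D_bounds AD q Hq).
    assert (ln (D q) <= ln q) by (apply ln_le_compat; lra).
    assert (c' * ln (D q) <= c' * ln q) by (apply Rmult_le_compat_l; lra).
    apply Rmult_le_reg_l with c; auto.
    replace (c * (c' / c * ln q + K / c)) with (c' * ln q + K) by (field; lra).
    rewrite Rel by auto. lra.
Qed.

Lemma ambiguity_D_identified D E dD dE th th' :
  ambiguity_D D -> ambiguity_D E -> deriv_on 0 1 D dD -> deriv_on 0 1 E dE ->
  0 < dD 0 -> 0 < dE 0 -> 0 <= th < 1 -> 0 <= th' < 1 ->
  (forall q, 0 < q < 1 -> (1 - th') * E q * dD q = (1 - th) * D q * dE q) ->
  th = th' /\ forall g, 0 <= g <= 1 -> D g = E g.
Proof.
  intros AD AE DD DE HD0 HE0 Hth Hth' Rel.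
  destruct (ambiguity_log_relation_const D E dD dE (1 - th) (1 - th') AD AE DD DE Rel)
    as [K HK].
  pose proof (ambiguity_log_exponent_le D E dE (1 - th) (1 - th') K AD AE DE HE0 ltac:(lra) HK).
  pose proof (ambiguity_log_exponent_le E D dD (1 - th') (1 - th) (- K) AE AD DD HD0 ltac:(lra)
    ltac:(intros q Hq; rewrite HK by auto; ring)).
  assert (Hth_eq : th = th') by lra. subst th'. split; [auto |].
  set (c := 1 - th) in *.
  assert (Hprop : forall q, 0 < q < 1 -> E q = exp (K / c) * D q).
  { intros q Hq. destruct (ambiguity_D_bounds AD q Hq). destruct (ambiguity_D_bounds AE q Hq).
    rewrite <- (exp_ln (E q)), <- (exp_ln (D q)), <- exp_plus by lra. f_equal.
    apply Rmult_eq_reg_l with c; [| unfold c; lra].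
    rewrite HK by auto. field. unfold c; lra. }
  pose proof AD as [_ [D0 [D1 _]]]. pose proof AE as [_ [E0 [E1 _]]].
  assert (Hk : exp (K / c) = 1).
  { pose proof (cont_on_at_right_end 0 1 E D _ Rlt_0_1
      (deriv_on_cont_on _ _ _ _ DE) (deriv_on_cont_on _ _ _ _ DD) Hprop) as Hend.
    rewrite E1, D1 in Hend. lra. }
  intros g Hg.
  destruct (Req_dec g 0) as [-> | Hg0]; [congruence |].
  destruct (Req_dec g 1) as [-> | Hg1]; [congruence |].
  rewrite Hprop, Hk by lra. ring.
Qed.

Lemma interior_incl_ends a b a' b' : a < b ->
  (forall v, a < v < b -> a' < v < b') -> a' <= a /\ b <= b'.
Proof.
  intros Hab Hincl. split; apply Rnot_lt_le; intros Hlt.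
  - pose proof (Rmin_l a' b). pose proof (Rmin_r a' b).
    assert (a < Rmin a' b) by (apply Rmin_glb_lt; lra).
    destruct (Hincl ((a + Rmin a' b) / 2)); lra.
  - pose proof (Rmax_l a b'). pose proof (Rmax_r a b').
    assert (Rmax a b' < b) by (apply Rmax_lub_lt; lra).
    destruct (Hincl ((b + Rmax a b') / 2)); lra.
Qed.

Theorem proposition3 :
  forall (n1 n2 : nat), (2 <= n1)%nat -> (n1 < n2)%nat ->
  forall (vl vh : R) (F0 D : R -> R) (theta : R)
         (vl' vh' : R) (F0' D' : R -> R) (theta' : R)
         (beta1 beta2 beta1' beta2' G1 G2 : R -> R),
    model_structure vl vh F0 D theta ->
    model_structure vl' vh' F0' D' theta' ->
    sym_equilibrium n1 vl vh F0 D theta beta1 ->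
    sym_equilibrium n2 vl vh F0 D theta beta2 ->
    sym_equilibrium n1 vl' vh' F0' D' theta' beta1' ->
    sym_equilibrium n2 vl' vh' F0' D' theta' beta2' ->
    bid_cdf vl vh F0 beta1 G1 -> bid_cdf vl' vh' F0' beta1' G1 ->
    bid_cdf vl vh F0 beta2 G2 -> bid_cdf vl' vh' F0' beta2' G2 ->
    vl = vl' /\ vh = vh' /\ (forall x, F0 x = F0' x) /\
    (forall g, 0 <= g <= 1 -> D g = D' g) /\ theta = theta'.
Proof.
  intros n1 n2 Hn1 Hn12 vl vh F0 D th vl' vh' F0' D' th' b1 b2 b1' b2' G1 G2
    M M' E1 E2 E1' E2' B1 B1' B2 B2'.
  pose proof M as [[Hvl [Hlo [Hhi _]]] [AD Hth]].
  pose proof M' as [[Hvl' [Hlo' [Hhi' _]]] [AD' Hth']].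
  pose proof AD as [_ [_ [_ [_ [dD [[DdD _] [HdD0 HdDp]]]]]]].
  pose proof AD' as [_ [_ [_ [_ [dE [[DdE _] [HdE0 HdEp]]]]]]].
  pose proof (interior_identification n1 n2 _ _ _ _ _ _ _ _ _ _ _ _ _ _ _ _ _ _ Hn1 Hn12
    M M' E1 E2 E1' E2' B1 B1' B2 B2' DdD HdDp DdE HdEp) as Int.
  pose proof (interior_identification n1 n2 _ _ _ _ _ _ _ _ _ _ _ _ _ _ _ _ _ _ Hn1 Hn12
    M' M E1' E2' E1 E2 B1' B1 B2' B2 DdE HdEp DdD HdDp) as Int'.
  destruct (interior_incl_ends vl vh vl' vh' Hvl (fun v Hv => proj1 (Int v Hv))).
  destruct (interior_incl_ends vl' vh' vl vh Hvl' (fun v Hv => proj1 (Int' v Hv))).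
  assert (vl = vl') as <- by lra. assert (vh = vh') as <- by lra.
  assert (HF : forall x, F0 x = F0' x).
  { intros x. destruct (Rle_dec x vl); [rewrite Hlo, Hlo'; auto |].
    destruct (Rle_dec vh x); [rewrite Hhi, Hhi'; auto |].
    symmetry; apply (Int x); lra. }
  destruct (ambiguity_D_identified D D' dD dE th th' AD AD' DdD DdE HdD0 HdE0 Hth Hth')
    as [Ht HD].
  { intros q Hq. destruct (value_cdf_onto (proj1 M) q Hq) as [v [Hv <-]]. apply Int; auto. }
  repeat split; auto.
Qed.
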